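(* There exist absolute constants $C, c > 0$ such that the following holds. Let $1 \le d \le n$ be integers, $p = \binom{n}{d}$, and let ${\bm{x}} \in \mathbb{R}^p$ follow the random tensor model of degree $d$ generated by $x\in\mathbb{R}^n$, and let $K = \max_{1\le i\le n}\mathbb{E}x_i^4$. If $K^{1/2} d / n^{1/3} < c$, then for every deterministic matrix $A \in \mathbb{R}^{p\times p}$, $$\operatorname{Var}({\bm{x}}^\mathsf{T} A {\bm{x}}) \le C\|A\|^2 p^2 \Big(\frac{K^{1/2} d}{n^{1/3}}\Big)^{3/2},$$ where $\|A\|$ is the spectral norm.
   Context: Random tensor model of degree $d$: let $x = (x_1,\dots,x_n) \in \mathbb{R}^n$ have independent entries with $\mathbb{E}x_i = 0$ and $\mathbb{E}x_i^2 = 1$. The random vector ${\bm{x}} \in \mathbb{R}^{\binom{n}{d}}$ has entries indexed by $d$-element subsets $\mathbf{i} \subset [n]$, given by ${\bm{x}}_{\mathbf{i}} = \prod_{i \in \mathbf{i}} x_i$. *)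

From HB Require Import structures.
From mathcomp Require Import all_boot all_order all_algebra.
Set Implicit Arguments. Unset Strict Implicit. Unset Printing Implicit Defensive.
Import Order.TTheory GRing.Theory Num.Theory.
Local Open Scope ring_scope.

(* d-element subsets of [n] = {0,...,n-1}: the index set of R^p, p = 'C(n,d). *)
Definition dsub (n d : nat) := {I : {set 'I_n} | #|I| == d}.

Section Model.
Variables (R : rcfType) (Omega : Type) (n : nat).

Definition monom (x : 'I_n -> Omega -> R) (a : 'I_n -> nat) : Omega -> R :=
  fun w => \prod_(i < n) x i w ^+ a i.

(* random variables that are polynomials in x of degree <= 4 in each variable
   (these are integrable whenever E x_i^4 < oo) *)
Definition poly4 (x : 'I_n -> Omega -> R) (f : Omega -> R) : Prop :=
  exists m (c : 'I_m -> R) (a : 'I_m -> 'I_n -> nat),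
    (forall k i, (a k i <= 4)%N) /\
    forall w, f w = \sum_(k < m) c k * monom x (a k) w.

(* E is an expectation for which x_1..x_n are independent, centered, with unit
   variance and finite fourth moments. *)
Definition indep_model (E : (Omega -> R) -> R) (x : 'I_n -> Omega -> R) : Prop :=
  (forall (a : R) f g, E (fun w => a * f w + g w) = a * E f + E g) /\
  E (fun _ => 1) = 1 /\
  (forall f, poly4 x f -> (forall w, 0 <= f w) -> 0 <= E f) /\
  (forall a : 'I_n -> nat, (forall i, (a i <= 4)%N) ->
     E (monom x a) = \prod_(i < n) E (fun w => x i w ^+ a i)) /\
  (forall i, E (x i) = 0) /\
  (forall i, E (fun w => x i w ^+ 2) = 1).

Definition variance (E : (Omega -> R) -> R) (f : Omega -> R) : R :=
  E (fun w => f w ^+ 2) - (E f) ^+ 2.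

Definition rtensor (d : nat) (x : 'I_n -> Omega -> R) (I : dsub n d) : Omega -> R :=
  fun w => \prod_(i in val I) x i w.

Definition quadform (d : nat) (x : 'I_n -> Omega -> R) (A : dsub n d -> dsub n d -> R)
  : Omega -> R :=
  fun w => \sum_(I : dsub n d) \sum_(J : dsub n d) rtensor x I w * A I J * rtensor x J w.

Definition Kmax (E : (Omega -> R) -> R) (x : 'I_n -> Omega -> R) : R :=
  \big[Num.max/0]_(i < n) E (fun w => x i w ^+ 4).
End Model.

Definition vnorm (R : rcfType) (T : finType) (v : T -> R) : R :=
  Num.sqrt (\sum_(t : T) v t ^+ 2).

Definition mxapp (R : rcfType) (T : finType) (A : T -> T -> R) (v : T -> R) : T -> R :=
  fun i => \sum_(j : T) A i j * v j.

Definition is_spectral_norm (R : rcfType) (T : finType) (A : T -> T -> R) (s : R) : Prop :=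
  (forall v, vnorm (mxapp A v) <= s * vnorm v) /\
  (forall s', (forall v, vnorm (mxapp A v) <= s' * vnorm v) -> s <= s').

From HB Require Import structures.
From mathcomp Require Import all_boot all_order all_algebra.
From mathcomp Require Import ring lra zify.
From Stdlib Require Import FunctionalExtensionality.
Set Implicit Arguments. Unset Strict Implicit. Unset Printing Implicit Defensive.
Import Order.TTheory GRing.Theory Num.Theory.
Local Open Scope ring_scope.

(* Expanding the square, Var(x^T A x) = sum A_IJ A_KL Cov(x_I x_J, x_K x_L).  By independence
   the covariance vanishes unless K and L agree outside U = I u J and K meets U, and then it is
   at most 2 K^|K n U| (third moments are bounded by K^(1/2), fourth ones by K, and K >= 1).
   Since the covariance kernel W is symmetric, sum a_P a_Q W_PQ <= sum_P a_P^2 sum_Q |W_PQ|,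
   and sum A_IJ^2 <= p ||A||^2.  Expanding (2|U|K)^a - 1 binomially and counting the d-subsets
   containing a given t-subset of U bounds every row sum by a geometric series in
   r ~ K d^3 / n, hence by 32 p K d^3 / n.  Finally K d^3 / n <= t^3 <= t^(3/2) for t <= 1. *)

Lemma sum_nat_of_bool_card (T : finType) (P : pred T) :
  (\sum_(i : T) (P i : nat))%N = #|[set i | P i]|.
Proof. by rewrite -sum1dep_card [RHS]big_mkcond; apply: eq_bigr => i _; case: (P i). Qed.

Lemma card_sum_in (T : finType) (S : {set T}) : #|S| = (\sum_(i : T) (i \in S))%N.
Proof. by rewrite sum_nat_of_bool_card; apply: eq_card => i; rewrite inE. Qed.

Lemma setP_neq (T : finType) (A B : {set T}) : A != B -> exists i, (i \in A) != (i \in B).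
Proof.
move=> neqAB; apply/existsP; apply: contraR neqAB; rewrite negb_exists => /forallP eqAB.
by apply/eqP/setP => i; apply/eqP; rewrite -[_ == _]negbK eqAB.
Qed.

Section IndependentModel.
Variables (R : rcfType) (Omega : Type) (n : nat).
Variables (E : (Omega -> R) -> R) (x : 'I_n -> Omega -> R).
Hypothesis HE : indep_model E x.

Lemma Eext f g : f =1 g -> E f = E g.
Proof. by move=> fg; congr E; apply: functional_extensionality. Qed.

Lemma E0 : E (fun _ => 0) = 0.
Proof.
have := proj1 HE (-1) (fun _ => 0) (fun _ => 0).
by rewrite (@Eext _ (fun _ => 0)) ?mulN1r ?addNr // => w; rewrite mulr0 addr0.
Qed.

Lemma EZ a f : E (fun w => a * f w) = a * E f.
Proof. by rewrite -[RHS]addr0 -E0 -(proj1 HE); apply: Eext => w; rewrite addr0. Qed.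

Lemma ED f g : E (fun w => f w + g w) = E f + E g.
Proof. by rewrite -[E f]mul1r -(proj1 HE); apply: Eext => w; rewrite mul1r. Qed.

Lemma Esum (I : Type) (r : seq I) (P : pred I) (F : I -> Omega -> R) :
  E (fun w => \sum_(i <- r | P i) F i w) = \sum_(i <- r | P i) E (F i).
Proof.
elim: r => [|i r IH]; first by rewrite big_nil -[RHS]E0; apply: Eext => w; rewrite big_nil.
rewrite big_cons -IH; case Pi: (P i); last by apply: Eext => w; rewrite big_cons Pi.
by rewrite -ED; apply: Eext => w; rewrite big_cons Pi.
Qed.

Definition mom i k := E (fun w => x i w ^+ k).

Lemma mom0 i : mom i 0 = 1.
Proof. by rewrite -(proj1 (proj2 HE)); apply: Eext => w; rewrite expr0. Qed.

Lemma mom1 i : mom i 1 = 0.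
Proof.
have [_ [_ [_ [_ [Ex _]]]]] := HE.
by rewrite -(Ex i); apply: Eext => w; rewrite expr1.
Qed.

Lemma mom2 i : mom i 2 = 1.
Proof. by have [_ [_ [_ [_ [_ Ex2]]]]] := HE; apply: Ex2. Qed.

Lemma Emonom (a : 'I_n -> nat) : (forall i, (a i <= 4)%N) ->
  E (monom x a) = \prod_(i < n) mom i (a i).
Proof. by have [_ [_ [_ [Eprod _]]]] := HE; apply: Eprod. Qed.

Definition single_exp (i : 'I_n) (k : nat) (j : 'I_n) : nat := if j == i then k else 0%N.

Lemma monom_single_exp i k w : monom x (single_exp i k) w = x i w ^+ k.
Proof.
rewrite /monom (bigD1 i) //= /single_exp eqxx big1 ?mulr1 // => j /negbTE ->.
by rewrite expr0.
Qed.

(* [E ((x_i^2 + l x_i + c)^2) >= 0], expanded using [E x_i = 0] and [E x_i^2 = 1]. *)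
Lemma mom_quadratic_ge0 i (l c : R) :
  0 <= mom i 4 + 2 * l * mom i 3 + (l ^+ 2 + 2 * c) + c ^+ 2.
Proof.
have [_ [_ [Epos _]]] := HE.
pose cf : seq R := [:: 1; 2 * l; l ^+ 2 + 2 * c; 2 * l * c; c ^+ 2].
pose f w := \sum_(k < 5) cf`_k * x i w ^+ (4 - k).
have f_sqr w : f w = (x i w ^+ 2 + l * x i w + c) ^+ 2.
  by rewrite /f !big_ord_recr big_ord0 /= !exprS !expr0; ring.
have : 0 <= E f.
  apply: Epos => [|w]; last by rewrite f_sqr sqr_ge0.
  exists 5%N, (fun k : 'I_5 => cf`_k), (fun k : 'I_5 => single_exp i (4 - k)).
  split=> [k j|w]; first by rewrite /single_exp; case: ifP; rewrite ?leq_subr.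
  by apply: eq_bigr => k _; rewrite monom_single_exp.
rewrite /f Esum !big_ord_recr big_ord0 /= !EZ -!/(mom i _) mom0 mom1 mom2.
by congr (_ <= _); ring.
Qed.

Local Notation kappa := (Kmax E x).
Local Notation sqrtK := (Num.sqrt (Kmax E x)).

Lemma mom4_le_Kmax i : mom i 4 <= kappa.
Proof. exact: (le_bigmax 0 (fun i => mom i 4) i). Qed.

Lemma mom4_ge1 i : 1 <= mom i 4.
Proof. by have := mom_quadratic_ge0 i 0 (-1); rewrite expr0n /= !mulr0 mul0r; nra. Qed.

Lemma Kmax_ge1 (i : 'I_n) : 1 <= kappa.
Proof. exact: le_trans (mom4_ge1 i) (mom4_le_Kmax i). Qed.

Lemma sqrtK_ge1 (i : 'I_n) : 1 <= sqrtK.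
Proof. by rewrite -sqrtr1 ler_sqrt ?(le_trans ler01 (Kmax_ge1 i)) ?Kmax_ge1. Qed.

Lemma sqr_sqrtK (i : 'I_n) : sqrtK ^+ 2 = kappa.
Proof. by rewrite sqr_sqrtr // (le_trans ler01 (Kmax_ge1 i)). Qed.

Lemma norm_mom3_le i : `|mom i 3| <= sqrtK.
Proof.
have := sqrtK_ge1 i; have := sqr_sqrtK i; have := mom4_le_Kmax i.
have := mom_quadratic_ge0 i sqrtK 0; have := mom_quadratic_ge0 i (- sqrtK) 0.
rewrite !mulr0 !addr0 expr0n /= addr0 sqrrN => Hm Hp *.
by rewrite ler_norml; apply/andP; split; nra.
Qed.

Lemma norm_mom_le i k : (k <= 4)%N -> `|mom i k| <= sqrtK ^+ (k - 2).
Proof.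
case: k => [|[|[|[|[|k]]]]] //= _.
- by rewrite mom0 normr1.
- by rewrite mom1 normr0 expr0 ler01.
- by rewrite mom2 normr1.
- by rewrite expr1 norm_mom3_le.
- rewrite (sqr_sqrtK i) ger0_norm ?mom4_le_Kmax //.
  exact: le_trans ler01 (mom4_ge1 i).
Qed.

Definition mult4 (I J K L : {set 'I_n}) (i : 'I_n) : nat :=
  ((i \in I) + (i \in J) + (i \in K) + (i \in L))%N.

Lemma mult4_le4 I J K L i : (mult4 I J K L i <= 4)%N.
Proof. by rewrite /mult4; case: (i \in I); case: (i \in J); case: (i \in K); case: (i \in L). Qed.

Definition prodx (S : {set 'I_n}) (w : Omega) : R := \prod_(i in S) x i w.

Lemma prodx_exp S w : prodx S w = \prod_(i < n) x i w ^+ (i \in S).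
Proof. by rewrite /prodx big_mkcond; apply: eq_bigr => i _; case: (i \in S). Qed.

Lemma prodx4_monom I J K L w :
  prodx I w * prodx J w * prodx K w * prodx L w = monom x (mult4 I J K L) w.
Proof. by rewrite !prodx_exp /monom -!big_split; apply: eq_bigr => i _; rewrite !exprD. Qed.

Definition cross_mom (I J K L : {set 'I_n}) : R := \prod_(i < n) mom i (mult4 I J K L i).

Lemma E_prodx4 I J K L :
  E (fun w => prodx I w * prodx J w * prodx K w * prodx L w) = cross_mom I J K L.
Proof. by rewrite (Eext (prodx4_monom I J K L)) Emonom // => i; apply: mult4_le4. Qed.

Lemma cross_mom_sym I J K L : cross_mom I J K L = cross_mom K L I J.
Proof. by apply: eq_bigr => i _; rewrite /mult4; congr mom; lia. Qed.

Lemma cross_mom2 I J : cross_mom I J set0 set0 = (I == J)%:R.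
Proof.
rewrite /cross_mom /mult4; have [<-|/setP_neq [i Ii_Ji]] := eqVneq.
  by rewrite big1 // => i _; rewrite !inE !addn0; case: (i \in I); rewrite ?mom2 ?mom0.
rewrite (bigD1 i) //= !inE !addn0 (_ : (_ + _)%N = 1%N) ?mom1 ?mul0r //.
by move: Ii_Ji; case: (i \in I); case: (i \in J).
Qed.

Lemma E_prodx2 I J : E (fun w => prodx I w * prodx J w) = (I == J)%:R.
Proof.
rewrite -cross_mom2 -E_prodx4; apply: Eext => w.
by rewrite /prodx !big_set0 !mulr1.
Qed.

Definition cross_cov I J K L := cross_mom I J K L - (I == J)%:R * (K == L)%:R.

Lemma cross_cov_sym I J K L : cross_cov I J K L = cross_cov K L I J.
Proof. by rewrite /cross_cov cross_mom_sym mulrC. Qed.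

Lemma variance_quadform d (A : dsub n d -> dsub n d -> R) :
  variance E (quadform x A) =
  \sum_(P : dsub n d * dsub n d) \sum_(Q : dsub n d * dsub n d)
    A P.1 P.2 * A Q.1 Q.2 * cross_cov (val P.1) (val P.2) (val Q.1) (val Q.2).
Proof.
have qfE w : quadform x A w =
    \sum_(P : dsub n d * dsub n d) A P.1 P.2 * (prodx (val P.1) w * prodx (val P.2) w).
  by rewrite /quadform pair_bigA; apply: eq_bigr => -[I J] _; rewrite /rtensor /prodx /=; ring.
have EqfE : E (quadform x A) =
    \sum_(P : dsub n d * dsub n d) A P.1 P.2 * (val P.1 == val P.2)%:R.
  by rewrite (Eext qfE) Esum; apply: eq_bigr => P _; rewrite EZ E_prodx2.
have Eqf2E : E (fun w => quadform x A w ^+ 2) =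
    \sum_(P : dsub n d * dsub n d) \sum_(Q : dsub n d * dsub n d)
      A P.1 P.2 * A Q.1 Q.2 * cross_mom (val P.1) (val P.2) (val Q.1) (val Q.2).
  rewrite -(@Eext (fun w => \sum_(P : dsub n d * dsub n d) \sum_(Q : dsub n d * dsub n d)
      A P.1 P.2 * A Q.1 Q.2 * (prodx (val P.1) w * prodx (val P.2) w *
                               prodx (val Q.1) w * prodx (val Q.2) w))).
    rewrite Esum; apply: eq_bigr => P _.
    by rewrite Esum; apply: eq_bigr => Q _; rewrite EZ E_prodx4.
  move=> w; rewrite qfE expr2 mulr_suml; apply: eq_bigr => P _.
  by rewrite mulr_sumr; apply: eq_bigr => Q _; ring.
rewrite /variance Eqf2E EqfE expr2 mulr_suml -sumrB; apply: eq_bigr => P _.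
by rewrite mulr_sumr -sumrB; apply: eq_bigr => Q _; rewrite /cross_cov; ring.
Qed.

Lemma norm_cross_mom_le I J K L :
  `|cross_mom I J K L| <= sqrtK ^+ (#|K :&: (I :|: J)| + #|L :&: (I :|: J)|).
Proof.
rewrite /cross_mom normr_prod !card_sum_in -big_split -prodrXr.
apply: ler_prod => i _; rewrite normr_ge0 /=.
apply: le_trans (norm_mom_le i (mult4_le4 I J K L i)) _.
apply: ler_weXn2l; first exact: sqrtK_ge1 i.
by rewrite /mult4 !inE; case: (i \in I); case: (i \in J); case: (i \in K); case: (i \in L).
Qed.

Lemma cross_mom_eq0 I J K L : K :\: (I :|: J) != L :\: (I :|: J) -> cross_mom I J K L = 0.
Proof.
move=> /setP_neq [i Ki_Li]; rewrite /cross_mom (bigD1 i) //= (_ : mult4 _ _ _ _ _ = 1%N).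
  by rewrite mom1 mul0r.
move: Ki_Li; rewrite /mult4 !inE.
by case: (i \in I); case: (i \in J); case: (i \in K); case: (i \in L).
Qed.

Lemma cross_mom_disjoint I J K : K :&: (I :|: J) = set0 -> cross_mom I J K K = (I == J)%:R.
Proof.
move=> KU0; rewrite -cross_mom2; apply: eq_bigr => i _.
have : i \notin K :&: (I :|: J) by rewrite KU0 inE.
rewrite /mult4 !inE.
by case: (i \in I); case: (i \in J); case: (i \in K) => //= _; rewrite mom2 mom0.
Qed.

(* Outside [I :|: J] an index lying in exactly one of [K], [L] contributes a factor [E x_i = 0];
   if [K] misses [I :|: J], the cross moment factors as [E (x_I x_J) E (x_K x_K)]. *)
Lemma norm_cross_cov_le (I J K L : {set 'I_n}) : #|K| = #|L| ->
  `|cross_cov I J K L| <=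
    ((K :\: (I :|: J) == L :\: (I :|: J)) && (K :&: (I :|: J) != set0))%:R
      * (2 * kappa ^+ #|K :&: (I :|: J)|).
Proof.
move=> cardKL; set U := I :|: J.
have [eqKLU|neqKLU] /= := eqVneq; last first.
  rewrite /cross_cov cross_mom_eq0 // (_ : (K == L) = false) ?mulr0 ?subr0 ?normr0 ?mul0r //.
  by apply: contraNF neqKLU => /eqP ->.
have [KU0|/set0Pn [i KUi]] /= := eqVneq.
  have eqKL : K = L.
    apply/eqP; rewrite eqEcard cardKL leqnn andbT; apply/subsetP => i Ki.
    have : i \in K :\: U.
      rewrite inE Ki andbT; apply: contraT => /negbNE Ui.
      have : i \in K :&: U by rewrite inE Ki.
      by rewrite KU0 inE.
    by rewrite eqKLU inE => /andP[].
  by rewrite -eqKL /cross_cov cross_mom_disjoint // eqxx mulr1 subrr normr0 mul0r.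
have cardLU : #|L :&: U| = #|K :&: U|.
  by have := cardsID U K; have := cardsID U L; rewrite eqKLU cardKL; lia.
rewrite mul1r mulr2n mulrDl mul1r; apply: le_trans (ler_normB _ _) _; apply: lerD.
  by apply: le_trans (norm_cross_mom_le I J K L) _; rewrite cardLU addnn -mul2n exprM sqr_sqrtK.
rewrite normrM !normr_nat; apply: le_trans (exprn_ege1 _ (Kmax_ge1 i)).
by rewrite -natrM lern1; case: (I == J); case: (K == L).
Qed.
End IndependentModel.

Lemma bin_leq_expn u t : ('C(u, t) <= u ^ t)%N.
Proof.
apply: (@leq_trans ('C(u, t) * t`!)); first by rewrite leq_pmulr ?fact_gt0.
rewrite bin_ffact ffact_prod; apply: (@leq_trans (\prod_(i < t) u)).
  by apply: leq_prod => i _; rewrite leq_subr.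
by rewrite prod_nat_const card_ord.
Qed.

Section DSubsetCounting.
Variables (n d : nat).
Local Notation D := (dsub n d).

Lemma card_dsub : #|{: D}| = 'C(n, d).
Proof.
rewrite card_sig; have := card_draws 'I_n d; rewrite card_ord => <-.
by apply: eq_card => I; rewrite !inE.
Qed.

Lemma card_val_dsub (K : D) : #|val K| = d.
Proof. exact: eqP (valP K). Qed.

Lemma count_agree_outside (U : {set 'I_n}) (K : D) :
  (\sum_(L : D) ((val K :\: U == val L :\: U) : nat) <= 'C(#|U|, #|val K :&: U|))%N.
Proof.
rewrite sum_nat_of_bool_card -cards_draws.
set A := [set L : D | _].
rewrite -(@card_in_imset _ _ (fun L : D => val L :&: U)); last first.
  move=> L1 L2; rewrite /A !inE => /eqP H1 /eqP H2 H; apply: val_inj.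
  by rewrite -(setID (val L1) U) -(setID (val L2) U) H -H1 -H2.
apply: subset_leq_card; apply/subsetP => T /imsetP [L]; rewrite /A inE => /eqP HL ->.
rewrite inE subsetIr /=.
apply/eqP; have := cardsID U (val K); have := cardsID U (val L).
by rewrite HL !card_val_dsub /=; lia.
Qed.

Lemma count_supersets (T : {set 'I_n}) :
  (#|[set K : D | T \subset val K]| <= 'C(n - #|T|, d - #|T|))%N.
Proof.
have -> : (n - #|T|)%N = #|~: T| by have := cardsC T; rewrite card_ord; lia.
rewrite -cards_draws -(@card_in_imset _ _ (fun K : D => val K :\: T)); last first.
  move=> K1 K2; rewrite !inE => H1 H2 H; apply: val_inj.
  by rewrite -(setID (val K1) T) -(setID (val K2) T) H (setIidPr H1) (setIidPr H2).
apply: subset_leq_card; apply/subsetP => S /imsetP [K]; rewrite inE => TK ->.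
rewrite inE; apply/andP; split; first by apply/subsetP => i; rewrite !inE => /andP[].
have := cardsID T (val K); rewrite card_val_dsub (setIidPr TK) => cardK.
by apply/eqP; rewrite -[X in (X - _)%N]cardK addKn.
Qed.

(* Double counting the pairs [(T, K)] with [T \subset val K :&: U] and [#|T| = t]. *)
Lemma sum_bin_meet (U : {set 'I_n}) t :
  (\sum_(K : D) 'C(#|val K :&: U|, t) <= 'C(#|U|, t) * 'C(n - t, d - t))%N.
Proof.
under eq_bigr => K _ do rewrite -cards_draws -sum_nat_of_bool_card.
rewrite exchange_big /= -cards_draws -sum_nat_of_bool_card big_distrl /=.
apply: leq_sum => T _.
have [/andP [_ /eqP <-]|TUt] := boolP ((T \subset U) && (#|T| == t)); last first.
  rewrite mul0n big1 // => K _; apply/eqP; rewrite eqb0; apply: contra TUt.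
  by rewrite subsetI => /andP[/andP[_ ->] ->].
rewrite mul1n; apply: leq_trans (count_supersets T).
rewrite sum_nat_of_bool_card; apply: subset_leq_card; apply/subsetP => K.
by rewrite !inE subsetI => /andP[/andP[-> _] _].
Qed.
End DSubsetCounting.

Lemma bin_subn_le (R : realFieldType) t n d : (t <= d)%N -> (d <= n)%N ->
  ('C(n - t, d - t))%:R <= ('C(n, d))%:R * (d%:R / n%:R) ^+ t :> R.
Proof.
elim: t n d => [|t IH] [|n] [|d] //= td dn; rewrite ?subn0 ?expr0 ?mulr1 //.
rewrite !subSS; apply: le_trans (IH n d td dn) _.
have binS : ('C(n, d))%:R = ('C(n.+1, d.+1))%:R * (d.+1%:R / n.+1%:R) :> R.
  have := congr1 (fun m => m%:R : R) (mul_bin_diag n.+1 d); rewrite /= !natrM => binE.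
  apply: (@mulfI _ n.+1%:R); first by rewrite pnatr_eq0.
  by rewrite binE; field; rewrite addrC natr1 pnatr_eq0.
rewrite binS exprS -mulrA; apply: ler_wpM2l; first exact: ler0n.
apply: ler_wpM2l; first by rewrite divr_ge0 ?ler0n.
apply: lerXn2r; rewrite ?nnegrE ?divr_ge0 ?ler0n //.
case: n dn {IH binS} => [|n] dn; first by rewrite invr0 mulr0 divr_ge0 ?ler0n.
rewrite ler_pdivrMr ?ltr0Sn // mulrAC ler_pdivlMr ?ltr0Sn // -!natrM ler_nat; nia.
Qed.

Lemma sum_bin_meet_le (R : realFieldType) n d (U : {set 'I_n}) t : (d <= n)%N ->
  (\sum_(K : dsub n d) 'C(#|val K :&: U|, t))%:R
    <= ('C(#|U|, t))%:R * (('C(n, d))%:R * (d%:R / n%:R) ^+ t) :> R.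
Proof.
move=> dn; have [td|dt] := leqP t d.
  apply: le_trans (_ : ('C(#|U|, t) * 'C(n - t, d - t))%:R <= _).
    by rewrite ler_nat sum_bin_meet.
  by rewrite natrM ler_wpM2l ?ler0n ?bin_subn_le.
rewrite big1 ?mulr_ge0 ?ler0n ?exprn_ge0 ?divr_ge0 ?ler0n // => K _.
apply: bin_small; apply: leq_ltn_trans dt.
by apply: leq_trans (subset_leq_card (subsetIl (val K) U)) _; rewrite card_val_dsub.
Qed.

Lemma sum_exprS_le (R : realFieldType) (r : R) m : 0 <= r -> r <= 1 / 2 ->
  \sum_(t < m) r ^+ t.+1 <= 2 * r.
Proof.
move=> r_ge0 r_le.
have geomE : (1 - r) * \sum_(t < m) r ^+ t.+1 = r - r ^+ m.+1.
  elim: m => [|m IH]; first by rewrite big_ord0 expr1 mulr0 subrr.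
  by rewrite big_ord_recr /= mulrDr IH !exprS; ring.
have : 0 <= \sum_(t < m) r ^+ t.+1 by apply: sumr_ge0 => t _; apply: exprn_ge0.
have : 0 <= r ^+ m.+1 by apply: exprn_ge0.
nra.
Qed.

Lemma exprD1n_sub1 (R : pzRingType) (z : R) a m : (a <= m)%N ->
  (z + 1) ^+ a - 1 = \sum_(t < m) z ^+ t.+1 *+ 'C(a, t.+1).
Proof.
move=> am; rewrite exprD1n (big_ord_widen m.+1 (fun i => z ^+ i *+ 'C(a, i))) //.
rewrite big_mkcond big_ord_recl /= bin0 expr0 mulr1n addrC addrK.
by apply: eq_bigr => i _; case: ltnP => // ai; rewrite bin_small ?mulr0n.
Qed.

Lemma expr_le_expr2M_sub1 (R : realDomainType) (y : R) a : 1 <= y -> (0 < a)%N ->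
  y ^+ a <= (2 * y) ^+ a - 1.
Proof.
move=> y_ge1 a_gt0; rewrite exprMn.
have : 2 <= 2 ^+ a :> R by case: a a_gt0 => // a _; rewrite exprS ler_peMr ?exprn_ege1 ?ler1n.
have : 1 <= y ^+ a by apply: exprn_ege1.
nra.
Qed.

(* [a p a q W p q <= (a p ^2 + a q ^2) |W p q| / 2], then symmetry of [W]. *)
Lemma sym_quad_le_rowsum (R : realFieldType) (T : finType) (a : T -> R) (W : T -> T -> R) :
  (forall p q, W p q = W q p) ->
  \sum_p \sum_q a p * a q * W p q <= \sum_p a p ^+ 2 * \sum_q `|W p q|.
Proof.
move=> Wsym.
apply: le_trans (_ : \sum_p \sum_q (a p ^+ 2 + a q ^+ 2) / 2 * `|W p q| <= _).
  apply: ler_sum => p _; apply: ler_sum => q _.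
  have [W_ge0|W_lt0] := lerP 0 (W p q).
    by rewrite ger0_norm //; have := mulr_ge0 W_ge0 (sqr_ge0 (a p - a q)); nra.
  rewrite ltr0_norm //; have := ltW W_lt0; rewrite -oppr_ge0 => W_le0.
  by have := mulr_ge0 W_le0 (sqr_ge0 (a p + a q)); nra.
have -> : \sum_p \sum_q (a p ^+ 2 + a q ^+ 2) / 2 * `|W p q| =
    (\sum_p \sum_q a p ^+ 2 * `|W p q|) / 2 + (\sum_p \sum_q a q ^+ 2 * `|W p q|) / 2.
  rewrite !mulr_suml -big_split; apply: eq_bigr => p _.
  by rewrite !mulr_suml -big_split; apply: eq_bigr => q _ /=; ring.
rewrite [X in _ + X / 2]exchange_big /=.
under [X in _ + X / 2]eq_bigr => p _ do under eq_bigr => q _ do rewrite Wsym.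
by rewrite -splitr; apply: ler_sum => p _; rewrite mulr_sumr.
Qed.

Lemma sum_sqr_le_card_opnorm (R : rcfType) (T : finType) (A : T -> T -> R) s :
  (forall v, vnorm (mxapp A v) <= s * vnorm v) ->
  \sum_I \sum_J A I J ^+ 2 <= #|T|%:R * s ^+ 2.
Proof.
move=> opA; rewrite exchange_big /= mulr_natl -sumr_const; apply: ler_sum => J _.
pose v K : R := (K == J)%:R.
have vnormE : vnorm v = 1.
  rewrite /vnorm (bigD1 J) //= big1 ?addr0 /v ?eqxx ?expr1n ?sqrtr1 // => K /negbTE ->.
  by rewrite expr0n.
have AvE : mxapp A v = A^~ J.
  apply: functional_extensionality => I.
  rewrite /mxapp (bigD1 J) //= big1 ?addr0 /v ?eqxx ?mulr1 // => K /negbTE ->.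
  by rewrite mulr0.
have := opA v; rewrite vnormE AvE mulr1 /vnorm => colJ.
rewrite -[X in X <= _]sqr_sqrtr; last by apply: sumr_ge0 => I _; apply: sqr_ge0.
by rewrite lerXn2r ?nnegrE ?sqrtr_ge0 // (le_trans (sqrtr_ge0 _) colJ).
Qed.

Section RowSum.
Variables (R : rcfType) (n d : nat) (kap : R) (U : {set 'I_n}).
Hypotheses (kap_ge1 : 1 <= kap) (dn : (d <= n)%N).

Lemma sum_agree_outside_le (K : dsub n d) :
  \sum_(L : dsub n d)
      ((val K :\: U == val L :\: U) && (val K :&: U != set0))%:R * (2 * kap ^+ #|val K :&: U|)
    <= 2 * ((2 * #|U|%:R * kap) ^+ #|val K :&: U| - 1).
Proof.
have [KU0|KU_neq0] := eqVneq (val K :&: U) set0.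
  by rewrite KU0 cards0 expr0 subrr mulr0 big1 // => L _; rewrite andbF mul0r.
set a := #|val K :&: U|; have a_gt0 : (0 < a)%N by rewrite card_gt0.
have u_ge1 : 1 <= #|U|%:R :> R.
  by rewrite ler1n (leq_trans a_gt0) ?subset_leq_card ?subsetIr.
under eq_bigr => L _ do rewrite andbT.
rewrite -mulr_suml -natr_sum.
apply: le_trans (_ : (#|U| ^ a)%:R * (2 * kap ^+ a) <= _).
  rewrite ler_wpM2r ?mulr_ge0 ?exprn_ge0 ?(le_trans ler01 kap_ge1) // ler_nat.
  exact: leq_trans (count_agree_outside U K) (bin_leq_expn _ _).
rewrite natrX mulrCA -exprMn ler_pM2l // -mulrA.
by apply: expr_le_expr2M_sub1 => //; apply: mulr_ege1.
Qed.

Lemma rowsum_indicator_le :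
  \sum_(K : dsub n d) \sum_(L : dsub n d)
      ((val K :\: U == val L :\: U) && (val K :&: U != set0))%:R * (2 * kap ^+ #|val K :&: U|)
    <= 2 * ('C(n, d)%:R *
            \sum_(t < n) ((2 * #|U|%:R * kap - 1) * #|U|%:R * (d%:R / n%:R)) ^+ t.+1).
Proof.
apply: le_trans (ler_sum _ (fun K _ => sum_agree_outside_le K)) _.
have [U0|U_gt0] := posnP #|U|.
  rewrite big1 => [|K _]; last by rewrite (_ : val K :&: U = set0) ?cards0 ?expr0 ?subrr ?mulr0 //;
    apply/eqP; rewrite -subset0 -(cards0_eq U0) subsetIr.
  by rewrite U0 mulr0 mul0r big1 ?mulr0 // => t _; rewrite expr0n.
set z := 2 * #|U|%:R * kap - 1.
have u_ge1 : 1 <= #|U|%:R :> R by rewrite ler1n.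
have z_ge0 : 0 <= z by rewrite subr_ge0 -mulrA mulr_ege1 ?ler1n ?mulr_ege1.
have a_le_n (K : dsub n d) : (#|val K :&: U| <= n)%N by rewrite -[n in (_ <= n)%N]card_ord max_card.
under eq_bigr => K _ do rewrite -[2 * _ * kap](subrK 1) (exprD1n_sub1 z (a_le_n K)).
rewrite -mulr_sumr ler_wpM2l // exchange_big mulr_sumr; apply: ler_sum => t _ /=.
under eq_bigr => K _ do rewrite -mulr_natr.
rewrite -mulr_sumr -natr_sum.
apply: le_trans (ler_wpM2l (exprn_ge0 _ z_ge0) (sum_bin_meet_le _ _ _ dn)) _.
apply: le_trans (_ : z ^+ t.+1 * ((#|U| ^ t.+1)%:R * ('C(n, d)%:R * (d%:R / n%:R) ^+ t.+1)) <= _).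
  rewrite ler_wpM2l ?exprn_ge0 // ler_wpM2r ?mulr_ge0 ?ler0n ?exprn_ge0 ?divr_ge0 ?ler0n //.
  by rewrite ler_nat bin_leq_expn.
by rewrite natrX !exprMn le_eqVlt; apply/orP; left; apply/eqP; ring.
Qed.
Local Notation tau := (kap * d%:R ^+ 3 / n%:R).

Lemma rowsum_indicator_le_tau : (0 < d)%N -> (d <= #|U| <= d + d)%N -> 16 * tau <= 1 ->
  \sum_(K : dsub n d) \sum_(L : dsub n d)
      ((val K :\: U == val L :\: U) && (val K :&: U != set0))%:R * (2 * kap ^+ #|val K :&: U|)
    <= 32 * 'C(n, d)%:R * tau.
Proof.
move=> d_gt0 /andP[d_le_u u_le_2d] tau_small; apply: le_trans rowsum_indicator_le _.
have u_ge1 : 1 <= #|U|%:R :> R by rewrite ler1n (leq_trans d_gt0).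
have u_le : #|U|%:R <= 2 * d%:R :> R by rewrite -natrM ler_nat mul2n -addnn.
set q := d%:R / n%:R; have q_ge0 : 0 <= q by rewrite divr_ge0 ?ler0n.
set r := (2 * #|U|%:R * kap - 1) * #|U|%:R * q.
have r_ge0 : 0 <= r.
  apply: mulr_ge0 q_ge0; apply: mulr_ge0 (ler0n _ _).
  by rewrite subr_ge0 -mulrA; apply: mulr_ege1; rewrite ?ler1n //; apply: mulr_ege1.
have r_le : r <= 8 * tau.
  have tauE : tau = kap * d%:R ^+ 2 * q by rewrite /q; ring.
  have : 0 <= (4 * d%:R ^+ 2 - #|U|%:R ^+ 2) * (2 * kap * q).
    apply: mulr_ge0 (mulr_ge0 (mulr_ge0 (ler0n _ 2) (le_trans ler01 kap_ge1)) q_ge0).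
    by have := ler0n R #|U|; rewrite subr_ge0; nra.
  have : 0 <= #|U|%:R * q by rewrite mulr_ge0 ?ler0n.
  by rewrite tauE /r; nra.
apply: le_trans (_ : 2 * ('C(n, d)%:R * (2 * r)) <= _).
  rewrite ler_wpM2l // ler_wpM2l ?ler0n // sum_exprS_le //.
  by move: (tau) tau_small r_le => T; lra.
have := ler0n R 'C(n, d); nra.
Qed.
End RowSum.

Section VarianceBound.
Variables (R : rcfType) (Omega : Type) (n d : nat).
Variables (E : (Omega -> R) -> R) (x : 'I_n -> Omega -> R).
Hypotheses (HE : indep_model E x) (d_gt0 : (0 < d)%N) (dn : (d <= n)%N).

Local Notation p := ('C(n, d)%:R : R).
Local Notation tau := (Kmax E x * d%:R ^+ 3 / n%:R).
Hypothesis tau_small : 16 * tau <= 1.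

Lemma Kmax_ge1_dsub : 1 <= Kmax E x.
Proof. exact: (Kmax_ge1 HE (Ordinal (leq_trans d_gt0 dn))). Qed.

Lemma tau_ge0 : 0 <= tau.
Proof. by rewrite !mulr_ge0 ?exprn_ge0 ?invr_ge0 ?ler0n ?(le_trans ler01 Kmax_ge1_dsub). Qed.

Lemma rowsum_cross_cov_le (I J : dsub n d) :
  \sum_(Q : dsub n d * dsub n d) `|cross_cov E x (val I) (val J) (val Q.1) (val Q.2)|
    <= 32 * p * tau.
Proof.
rewrite -(pair_bigA _ (fun K L => `|cross_cov E x (val I) (val J) (val K) (val L)|)).
set U := val I :|: val J.
apply: le_trans (rowsum_indicator_le_tau (U := U) Kmax_ge1_dsub dn d_gt0 _ tau_small).
  apply: ler_sum => K _; apply: ler_sum => L _; apply: (norm_cross_cov_le HE).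
  by rewrite (card_val_dsub K) (card_val_dsub L).
have := subset_leq_card (subsetUl (val I) (val J)).
have := (leq_card_setU (val I) (val J)).1.
by rewrite !card_val_dsub => -> ->.
Qed.

Lemma variance_quadform_le (A : dsub n d -> dsub n d -> R) s :
  (forall v, vnorm (mxapp A v) <= s * vnorm v) ->
  variance E (quadform x A) <= 32 * s ^+ 2 * p ^+ 2 * tau.
Proof.
move=> opA; rewrite (variance_quadform HE).
apply: le_trans (sym_quad_le_rowsum (fun P => A P.1 P.2) _) _ => [P Q|].
  exact: cross_cov_sym.
apply: le_trans (_ : \sum_(P : dsub n d * dsub n d) A P.1 P.2 ^+ 2 * (32 * p * tau) <= _).
  by apply: ler_sum => P _; rewrite ler_wpM2l ?sqr_ge0 ?rowsum_cross_cov_le.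
rewrite -mulr_suml -(pair_bigA _ (fun I J => A I J ^+ 2)) /=.
have := sum_sqr_le_card_opnorm opA; rewrite (card_dsub n d) => frobA.
apply: le_trans (ler_wpM2r (mulr_ge0 (mulr_ge0 (ler0n _ 32) (ler0n _ _)) tau_ge0) frobA) _.
by rewrite le_eqVlt; apply/orP; left; apply/eqP; ring.
Qed.
End VarianceBound.

Theorem theorem1p7 (R : rcfType) :
  exists C c : R, 0 < C /\ 0 < c /\
  forall (n d : nat) (Omega : Type) (E : (Omega -> R) -> R) (x : 'I_n -> Omega -> R),
    (1 <= d)%N -> (d <= n)%N ->
    indep_model E x ->
    let K := Kmax E x in
    let t3 := (Num.sqrt K * d%:R) ^+ 3 / n%:R in
    t3 < c ^+ 3 ->
    forall (A : dsub n d -> dsub n d -> R) (s : R),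
      is_spectral_norm A s ->
      variance E (quadform x A) <= C * s ^+ 2 * ('C(n, d))%:R ^+ 2 * Num.sqrt t3.
Proof.
exists 32, (1 / 4); split; first by rewrite ltr0n.
split; first by rewrite divr_gt0 ?ltr0n.
move=> n d Omega E x d_gt0 dn HE K t3 t3_small A s [opA _].
pose i0 := Ordinal (leq_trans d_gt0 dn).
have t3E : t3 = Num.sqrt K ^+ 3 * (d%:R ^+ 3 / n%:R) by rewrite /t3 exprMn -mulrA.
have cube_ge0 : 0 <= d%:R ^+ 3 / n%:R :> R by rewrite divr_ge0 ?exprn_ge0 ?ler0n.
have tau_le_t3 : K * d%:R ^+ 3 / n%:R <= t3.
  rewrite t3E -mulrA ler_wpM2r //.
  by have := ler_weXn2l (sqrtK_ge1 HE i0) (isT : (2 <= 3)%N); rewrite sqr_sqrtK.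
have t3_ge0 : 0 <= t3 by rewrite t3E mulr_ge0 ?exprn_ge0 ?sqrtr_ge0.
have t3_le : t3 <= 1 / 64 by move: t3_small; rewrite expr_div_n expr1n; lra.
apply: le_trans (variance_quadform_le HE d_gt0 dn _ opA) _.
  by apply: le_trans (ler_wpM2l (ler0n _ 16) tau_le_t3) _; lra.
apply: ler_wpM2l; first by rewrite mulr_ge0 ?sqr_ge0 ?(mulr_ge0 (ler0n _ 32) (sqr_ge0 s)).
apply: le_trans tau_le_t3 _.
rewrite -{1}(sqr_sqrtr t3_ge0) expr2 ler_piMr ?sqrtr_ge0 //.
by rewrite -sqrtr1 ler_sqrt //; lra.
Qed.
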